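(* (a) Soundness $\Delta^{\mathcal T}_{\mathcal R}\triangleleft\lambda^{\mathcal T}_\cap$ holds for $\Delta^{CD}_{\equiv}$, $\Delta^{CDV}_{\equiv}$, $\Delta^{CDS}_{\equiv}$, $\Delta^{BCD}_{\equiv}$, $\Delta^{CDS}_{=_\beta}$ and $\Delta^{BCD}_{=_\beta}$, and fails for $\Delta^{CD}_{=_\beta}$, $\Delta^{CDV}_{=_\beta}$, $\Delta^{CDV}_{=_{\beta\eta}}$ and $\Delta^{BCD}_{=_{\beta\eta}}$. (b) Completeness $\Delta^{\mathcal T}_{\mathcal R}\triangleright\lambda^{\mathcal T}_\cap$ holds for all ten systems $\Delta^{\mathcal T}_{\equiv}$, $\Delta^{\mathcal T}_{=_\beta}$ ($\mathcal T\in\{CD,CDS,CDV,BCD\}$), $\Delta^{CDV}_{=_{\beta\eta}}$, $\Delta^{BCD}_{=_{\beta\eta}}$. Consequently $\Delta^{\mathcal T}_{\mathcal R}\sim\lambda^{\mathcal T}_\cap$ exactly for the six systems listed as sound in (a).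
   Context: Type atoms: a set $\mathbb{A}$ of symbols; $\omega$ denotes a distinguished atom (the universal type). $\mathbb{A}_\infty=\{\mathtt a_i\mid i\in\mathbb N\}$ with each $\mathtt a_i\neq\omega$, and $\mathbb{A}^\omega_\infty=\mathbb{A}_\infty\cup\{\omega\}$. Intersection types over $\mathbb A$: $\sigma::= a\mid\sigma\to\sigma\mid\sigma\cap\sigma$ ($a\in\mathbb A$). An intersection type theory $\mathcal T$ over $\mathbb A$ is a set of inequalities $\sigma\le\tau$ (written $\sigma\le_{\mathcal T}\tau$) closed under (refl) $\sigma\le\sigma$; (incl) $\sigma\cap\tau\le\sigma$ and $\sigma\cap\tau\le\tau$; (glb) $\rho\le\sigma$ and $\rho\le\tau$ imply $\rho\le\sigma\cap\tau$; (trans) $\sigma\le\tau$ and $\tau\le\rho$ imply $\sigma\le\rho$. Additional axioms/rules: $(\omega_{top})$ $\sigma\le\omega$; $(\omega_{\to})$ $\omega\le\sigma\to\omega$; $(\to\cap)$ $(\sigma\to\tau)\cap(\sigma\to\rho)\le\sigma\to(\tau\cap\rho)$; $(\to)$ $\sigma_2\le\sigma_1$ and $\tau_1\le\tau_2$ imply $\sigma_1\to\tau_1\le\sigma_2\to\tau_2$. $\mathcal T_{CD}$ = smallest type theory over $\mathbb A_\infty$; $\mathcal T_{CDS}$ = smallest over $\mathbb A^\omega_\infty$ containing $(\omega_{top})$; $\mathcal T_{CDV}$ = smallest over $\mathbb A_\infty$ closed under $(\to)$ and $(\to\cap)$; $\mathcal T_{BCD}$ = smallest over $\mathbb A^\omega_\infty$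 closed under $(\to),(\to\cap),(\omega_{top}),(\omega_\to)$. We abbreviate these as CD, CDS, CDV, BCD. Type assignment: for a type theory $\mathcal T$ over atoms $\mathbb A$, $\lambda^{\mathcal T}_\cap$ derives judgments $B\vdash^{\mathcal T}_\cap M:\sigma$ for pure $\lambda$-terms $M$ and bases $B$ (finite sets of declarations $x{:}\sigma$ with distinct variables) by: (ax) $B\vdash x:\sigma$ if $x{:}\sigma\in B$; ($\to$I) from $B,x{:}\sigma\vdash M:\tau$ infer $B\vdash\lambda x.M:\sigma\to\tau$; ($\to$E) from $B\vdash M:\sigma\to\tau$ and $B\vdash N:\sigma$ infer $B\vdash MN:\tau$; ($\cap$I) from $B\vdash M:\sigma$ and $B\vdash M:\tau$ infer $B\vdash M:\sigma\cap\tau$; ($\cap$E) from $B\vdash M:\sigma\cap\tau$ infer $B\vdash M:\sigma$ and $B\vdash M:\tau$; (top) $B\vdash M:\omega$ if $\omega\in\mathbb A$; ($\le_{\mathcal T}$) from $B\vdash M:\sigma$ and $\sigma\le_{\mathcal T}\tau$ infer $B\vdash M:\tau$. $\Delta$-terms: $\Delta::=u_\Delta\mid x\mid\lambda x{:}\sigma.\Delta\mid\Delta\,\Delta\mid\langle\Delta,\Delta\rangle\mid pr_1\Delta\mid pr_2\Delta\mid\Delta^\sigma$, where for every (not necessarily typable) $\Delta$-term $\Delta$ there is a constant $u_\Delta$. The essence $\|\Delta\|$ is the pure $\lambda$-term defined by $\|x\|=x$, $\|u_\Delta\|=\|\Delta\|$, $\|\Delta^\sigma\|=\|\Delta\|$,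 $\|\lambda x{:}\sigma.\Delta\|=\lambda x.\|\Delta\|$, $\|\Delta_1\Delta_2\|=\|\Delta_1\|\,\|\Delta_2\|$, $\|\langle\Delta_1,\Delta_2\rangle\|=\|\Delta_1\|$, $\|pr_i\Delta\|=\|\Delta\|$. Let $\mathcal R$ be one of $\equiv$ (syntactic identity up to $\alpha$), $=_\beta$, $=_{\beta\eta}$ on pure $\lambda$-terms. The typed system $\Delta^{\mathcal T}_{\mathcal R}$ derives $B\vdash^{\mathcal T}_{\mathcal R}\Delta:\sigma$ by: (top) $B\vdash u_\Delta:\omega$ if $\omega\in\mathbb A$; (ax) $B\vdash x:\sigma$ if $x{:}\sigma\in B$; ($\to$I) from $B,x{:}\sigma\vdash\Delta:\tau$ infer $B\vdash\lambda x{:}\sigma.\Delta:\sigma\to\tau$; ($\to$E) from $B\vdash\Delta_1:\sigma\to\tau$ and $B\vdash\Delta_2:\sigma$ infer $B\vdash\Delta_1\Delta_2:\tau$; ($\cap$I) from $B\vdash\Delta_1:\sigma$, $B\vdash\Delta_2:\tau$ and $\|\Delta_1\|\mathrel{\mathcal R}\|\Delta_2\|$ infer $B\vdash\langle\Delta_1,\Delta_2\rangle:\sigma\cap\tau$; ($\cap$E$_1$) from $B\vdash\Delta:\sigma\cap\tau$ infer $B\vdash pr_1\Delta:\sigma$; ($\cap$E$_2$) from $B\vdash\Delta:\sigma\cap\tau$ infer $B\vdash pr_2\Delta:\tau$; ($\le_{\mathcal T}$) from $B\vdash\Delta:\sigma$ and $\sigma\le_{\mathcal T}\tau$ infer $B\vdash\Delta^\tau:\tau$.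 We write $\Delta^{CD}_{\mathcal R}$ for $\Delta^{\mathcal T_{CD}}_{\mathcal R}$, etc. Soundness $\Delta^{\mathcal T}_{\mathcal R}\triangleleft\lambda^{\mathcal T}_\cap$: for all $B,\Delta,\sigma$, $B\vdash^{\mathcal T}_{\mathcal R}\Delta:\sigma$ implies $B\vdash^{\mathcal T}_\cap\|\Delta\|:\sigma$. Completeness $\Delta^{\mathcal T}_{\mathcal R}\triangleright\lambda^{\mathcal T}_\cap$: for all $B,M,\sigma$, $B\vdash^{\mathcal T}_\cap M:\sigma$ implies there is $\Delta$ with $M\equiv\|\Delta\|$ and $B\vdash^{\mathcal T}_{\mathcal R}\Delta:\sigma$. Isomorphism $\Delta^{\mathcal T}_{\mathcal R}\sim\lambda^{\mathcal T}_\cap$: both soundness and completeness. *)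

From Stdlib Require Import List Arith Relations.
Import ListNotations.
Unset Implicit Arguments.

Inductive ty (A : Type) : Type :=
| TAtom : A -> ty A
| TArr  : ty A -> ty A -> ty A
| TInt  : ty A -> ty A -> ty A.
Arguments TAtom {A} _.
Arguments TArr {A} _ _.
Arguments TInt {A} _ _.

(* A "system" fixes the atom set, whether the distinguished atom omega
   belongs to it (omega = Some w), and whether the arrow rules
   (->) and (->cap) are part of the theory. *)
Record system : Type := Sys {
  atoms : Type;
  omega : option atoms;
  arrowRules : bool }.

(* A_infinity = { a_i | i in N } represented by nat;
   A^omega_infinity = A_infinity + {omega} represented by option nat,
   with None = omega and Some i = a_i. *)
Definition CD  : system := @Sys nat None false.
Definition CDS : system := @Sys (option nat) (Some None) false.
Definition CDV : system := @Sys nat None true.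
Definition BCD : system := @Sys (option nat) (Some None) true.

(* The smallest intersection type theory over the atoms of S closed under
   the rules selected by S:
   CD : none; CDS : (omega_top); CDV : (->), (->cap);
   BCD : (->), (->cap), (omega_top), (omega_->). *)
Inductive tle (S : system) : ty (atoms S) -> ty (atoms S) -> Prop :=
| tle_refl  : forall s, tle S s s
| tle_incl1 : forall s t, tle S (TInt s t) s
| tle_incl2 : forall s t, tle S (TInt s t) t
| tle_glb   : forall r s t, tle S r s -> tle S r t -> tle S r (TInt s t)
| tle_trans : forall s t r, tle S s t -> tle S t r -> tle S s r
| tle_omega_top : forall w s, omega S = Some w -> tle S s (TAtom w)
| tle_omega_arr : forall w s, omega S = Some w -> arrowRules S = true ->
    tle S (TAtom w) (TArr s (TAtom w))
| tle_arr_int : forall s t r, arrowRules S = true ->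
    tle S (TInt (TArr s t) (TArr s r)) (TArr s (TInt t r))
| tle_arr : forall s1 s2 t1 t2, arrowRules S = true ->
    tle S s2 s1 -> tle S t1 t2 -> tle S (TArr s1 t1) (TArr s2 t2).

(* ---------- Pure lambda terms (de Bruijn indices: alpha-equivalence is
   syntactic equality) ---------- *)
Inductive term : Type :=
| Var : nat -> term
| Lam : term -> term
| App : term -> term -> term.

Fixpoint shift (c : nat) (t : term) : term :=
  match t with
  | Var n => if n <? c then Var n else Var (S n)
  | Lam t => Lam (shift (S c) t)
  | App a b => App (shift c a) (shift c b)
  end.

Fixpoint subst (k : nat) (u : term) (t : term) : term :=
  match t with
  | Var n => match Nat.compare n k with
             | Lt => Var n
             | Eq => u
             | Gt => Var (pred n)
             end
  | Lam t => Lam (subst (S k) (shift 0 u) t)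
  | App a b => App (subst k u a) (subst k u b)
  end.

Inductive beta : term -> term -> Prop :=
| beta_red  : forall t u, beta (App (Lam t) u) (subst 0 u t)
| beta_lam  : forall t t', beta t t' -> beta (Lam t) (Lam t')
| beta_appl : forall a a' b, beta a a' -> beta (App a b) (App a' b)
| beta_appr : forall a b b', beta b b' -> beta (App a b) (App a b').

Inductive betaeta : term -> term -> Prop :=
| be_beta : forall t u, betaeta (App (Lam t) u) (subst 0 u t)
| be_eta  : forall m, betaeta (Lam (App (shift 0 m) (Var 0))) m
| be_lam  : forall t t', betaeta t t' -> betaeta (Lam t) (Lam t')
| be_appl : forall a a' b, betaeta a a' -> betaeta (App a b) (App a' b)
| be_appr : forall a b b', betaeta b b' -> betaeta (App a b) (App a b').

Definition eq_syn   : term -> term -> Prop := @eq term.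
Definition eq_beta  : term -> term -> Prop := clos_refl_sym_trans term beta.
Definition eq_betaeta : term -> term -> Prop := clos_refl_sym_trans term betaeta.

(* ---------- Bases: position i of the list holds the declaration (if any)
   of the free variable with de Bruijn index i. ---------- *)
Definition basis (S : system) := list (option (ty (atoms S))).

Definition decl (S : system) (B : basis S) (x : nat) (s : ty (atoms S)) : Prop :=
  nth_error B x = Some (Some s).
Arguments decl : clear implicits.

Inductive lty (S : system) : basis S -> term -> ty (atoms S) -> Prop :=
| lty_ax : forall B x s, decl S B x s -> lty S B (Var x) s
| lty_lam : forall B M s t, lty S (Some s :: B) M t -> lty S B (Lam M) (TArr s t)
| lty_app : forall B M N s t, lty S B M (TArr s t) -> lty S B N s -> lty S B (App M N) t
| lty_intI : forall B M s t, lty S B M s -> lty S B M t -> lty S B M (TInt s t)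
| lty_intE1 : forall B M s t, lty S B M (TInt s t) -> lty S B M s
| lty_intE2 : forall B M s t, lty S B M (TInt s t) -> lty S B M t
| lty_top : forall B M w, omega S = Some w -> lty S B M (TAtom w)
| lty_le : forall B M s t, lty S B M s -> tle S s t -> lty S B M t.

Inductive dterm (A : Type) : Type :=
| DU    : dterm A -> dterm A
| DVar  : nat -> dterm A
| DLam  : ty A -> dterm A -> dterm A
| DApp  : dterm A -> dterm A -> dterm A
| DPair : dterm A -> dterm A -> dterm A
| DPr1  : dterm A -> dterm A
| DPr2  : dterm A -> dterm A
| DCoe  : dterm A -> ty A -> dterm A.
Arguments DU {A} _.
Arguments DVar {A} _.
Arguments DLam {A} _ _.
Arguments DApp {A} _ _.
Arguments DPair {A} _ _.
Arguments DPr1 {A} _.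
Arguments DPr2 {A} _.
Arguments DCoe {A} _ _.

Fixpoint essence {A : Type} (d : dterm A) : term :=
  match d with
  | DU d => essence d
  | DVar x => Var x
  | DLam _ d => Lam (essence d)
  | DApp d1 d2 => App (essence d1) (essence d2)
  | DPair d1 _ => essence d1
  | DPr1 d => essence d
  | DPr2 d => essence d
  | DCoe d _ => essence d
  end.

Inductive dty (S : system) (R : term -> term -> Prop)
  : basis S -> dterm (atoms S) -> ty (atoms S) -> Prop :=
| dty_top : forall B d w, omega S = Some w -> dty S R B (DU d) (TAtom w)
| dty_ax : forall B x s, decl S B x s -> dty S R B (DVar x) s
| dty_lam : forall B d s t, dty S R (Some s :: B) d t ->
    dty S R B (DLam s d) (TArr s t)
| dty_app : forall B d1 d2 s t, dty S R B d1 (TArr s t) -> dty S R B d2 s ->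
    dty S R B (DApp d1 d2) t
| dty_intI : forall B d1 d2 s t, dty S R B d1 s -> dty S R B d2 t ->
    R (essence d1) (essence d2) -> dty S R B (DPair d1 d2) (TInt s t)
| dty_intE1 : forall B d s t, dty S R B d (TInt s t) -> dty S R B (DPr1 d) s
| dty_intE2 : forall B d s t, dty S R B d (TInt s t) -> dty S R B (DPr2 d) t
| dty_le : forall B d s t, dty S R B d s -> tle S s t -> dty S R B (DCoe d t) t.

Definition sound (S : system) (R : term -> term -> Prop) : Prop :=
  forall (B : basis S) (d : dterm (atoms S)) (s : ty (atoms S)),
    dty S R B d s -> lty S B (essence d) s.

Definition complete (S : system) (R : term -> term -> Prop) : Prop :=
  forall (B : basis S) (M : term) (s : ty (atoms S)),
    lty S B M s -> exists d : dterm (atoms S), M = essence d /\ dty S R B d s.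

Definition isomorphic (S : system) (R : term -> term -> Prop) : Prop :=
  sound S R /\ complete S R.

From Stdlib Require Import List Arith Relations Lia.
Import ListNotations.

(* Completeness holds for every reflexive R: a typing derivation of lambda^T_cap
   is mirrored rule by rule by a Delta-term, with u_M for the (top) rule, and
   pairs only ever join two derivations for the same term.  Soundness reduces
   to transferring typings along R from the right essence to the left one.
   This is trivial for syntactic identity; for =_beta in the presence of omega,
   typing is invariant under beta-conversion (subject expansion needs omega to
   type the discarded argument).  Without omega,
   <lam x:(a->a)/\a. (lam y:a. x) (pr1 x (pr2 x)), lam x:a. x> is typed, but
   lam x. (lam y. x) (x x) has no type a -> a since x x forces an arrow type
   on x.  In BCD with eta, x : a0 |- <lam y:omega. u_(x y), x> : (omega->omega)/\a0,
   whereas an abstraction only gets types whose atoms are all omega. *)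

Fixpoint leaves {A} (t : ty A) : list (ty A) :=
  match t with TInt a b => leaves a ++ leaves b | _ => [t] end.

Lemma leaves_not_int {A} (t : ty A) u p q : In u (leaves t) -> u <> TInt p q.
Proof.
  induction t; simpl; intros H.
  - destruct H as [<-|[]]; discriminate.
  - destruct H as [<-|[]]; discriminate.
  - apply in_app_or in H as [H|H]; auto.
Qed.

Lemma nth_error_mid {X} (B1 B2 : list X) x : nth_error (B1 ++ x :: B2) (length B1) = Some x.
Proof. rewrite nth_error_app2, Nat.sub_diag by lia. reflexivity. Qed.

Lemma nth_error_app_cons_neq {X} (B1 B2 : list X) a b n : n <> length B1 ->
  nth_error (B1 ++ a :: B2) n = nth_error (B1 ++ b :: B2) n.
Proof.
  intros Hn. destruct (Nat.lt_ge_cases n (length B1)).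
  - rewrite !nth_error_app1 by lia. reflexivity.
  - rewrite !nth_error_app2 by lia. destruct (n - length B1) eqn:E; [lia|reflexivity].
Qed.

Section Typing.
Variable Sy : system.
Notation tyS := (ty (atoms Sy)).

Lemma tle_leaf (t u : tyS) : In u (leaves t) -> tle Sy t u.
Proof.
  induction t; simpl; intros H.
  - destruct H as [<-|[]]; apply tle_refl.
  - destruct H as [<-|[]]; apply tle_refl.
  - apply in_app_or in H as [H|H].
    + eapply tle_trans; [apply tle_incl1|auto].
    + eapply tle_trans; [apply tle_incl2|auto].
Qed.

Lemma lty_of_leaves B M (t : tyS) :
  (forall u, In u (leaves t) -> lty Sy B M u) -> lty Sy B M t.
Proof.
  induction t; simpl; intros H; auto.
  apply lty_intI; [apply IHt1|apply IHt2]; intros; apply H, in_or_app; auto.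
Qed.

Lemma lty_weaken B1 B2 y M (T : tyS) :
  lty Sy (B1 ++ B2) M T -> lty Sy (B1 ++ y :: B2) (shift (length B1) M) T.
Proof.
  remember (B1 ++ B2) as B eqn:HB. intros H. revert B1 HB.
  induction H; intros B1 HB; subst B; simpl.
  - unfold decl in H. destruct (Nat.ltb_spec x (length B1)); apply lty_ax; unfold decl.
    + rewrite nth_error_app1 in * by lia. exact H.
    + rewrite nth_error_app2 in * by lia.
      replace (S x - length B1) with (S (x - length B1)) by lia. exact H.
  - apply lty_lam. exact (IHlty (Some s :: B1) eq_refl).
  - eapply lty_app; eauto.
  - apply lty_intI; eauto.
  - eapply lty_intE1; eauto.
  - eapply lty_intE2; eauto.
  - apply lty_top; auto.
  - eapply lty_le; eauto.
Qed.

Lemma shift_eq_var c M n : shift c M = Var n ->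
  exists m, M = Var m /\ ((m < c /\ n = m) \/ (c <= m /\ n = S m)).
Proof.
  destruct M as [m| |]; simpl; intro H; try discriminate.
  exists m; split; auto.
  revert H; destruct (Nat.ltb_spec m c); intro E; injection E; intros; subst; auto.
Qed.

Lemma shift_eq_lam c M X : shift c M = Lam X -> exists M', M = Lam M' /\ X = shift (S c) M'.
Proof.
  destruct M as [m| |]; simpl; intro H; try discriminate.
  - revert H; destruct (m <? c); discriminate.
  - injection H; intros; subst; eauto.
Qed.

Lemma shift_eq_app c M X Y : shift c M = App X Y ->
  exists M1 M2, M = App M1 M2 /\ X = shift c M1 /\ Y = shift c M2.
Proof.
  destruct M as [m| |]; simpl; intro H; try discriminate.
  - revert H; destruct (m <? c); discriminate.
  - injection H; intros; subst; eauto.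
Qed.

Lemma lty_strengthen B1 B2 y M (T : tyS) :
  lty Sy (B1 ++ y :: B2) (shift (length B1) M) T -> lty Sy (B1 ++ B2) M T.
Proof.
  remember (B1 ++ y :: B2) as B eqn:HB. remember (shift (length B1) M) as X eqn:HX.
  intros H. revert B1 M HB HX.
  induction H; intros B1 M0 HB HX; subst B.
  - symmetry in HX. apply shift_eq_var in HX as [m [-> [[Hl ->]|[Hl ->]]]];
      apply lty_ax; unfold decl in *.
    + rewrite nth_error_app1 in * by lia. exact H.
    + rewrite nth_error_app2 in * by lia.
      replace (S m - length B1) with (S (m - length B1)) in H by lia. exact H.
  - symmetry in HX. apply shift_eq_lam in HX as [M' [-> ->]].
    apply lty_lam. exact (IHlty (Some s :: B1) M' eq_refl eq_refl).
  - symmetry in HX. apply shift_eq_app in HX as [M1 [M2 [-> [-> ->]]]].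
    eapply lty_app; eauto.
  - apply lty_intI; eauto.
  - eapply lty_intE1; eauto.
  - eapply lty_intE2; eauto.
  - apply lty_top; auto.
  - eapply lty_le; eauto.
Qed.

Fixpoint lift (k : nat) (N : term) : term :=
  match k with 0 => N | S k => shift 0 (lift k N) end.

Lemma lty_unlift B1 B2 N (T : tyS) :
  lty Sy (B1 ++ B2) (lift (length B1) N) T -> lty Sy B2 N T.
Proof.
  induction B1; simpl; intros H; auto.
  apply IHB1. exact (lty_strengthen nil (B1 ++ B2) a _ _ H).
Qed.

Lemma lty_subst B1 B2 s u M (T : tyS) :
  lty Sy (B1 ++ Some s :: B2) M T -> lty Sy (B1 ++ B2) u s ->
  lty Sy (B1 ++ B2) (subst (length B1) u M) T.
Proof.
  remember (B1 ++ Some s :: B2) as B eqn:HB. intros H. revert B1 u HB.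
  induction H; intros B1 u0 HB Hu; subst B; simpl.
  - unfold decl in H. destruct (Nat.compare_spec x (length B1)).
    + subst. rewrite nth_error_mid in H. injection H as <-. exact Hu.
    + apply lty_ax; unfold decl. rewrite nth_error_app1 in * by lia. exact H.
    + apply lty_ax; unfold decl. rewrite nth_error_app2 in * by lia.
      replace (x - length B1) with (S (pred x - length B1)) in H by lia. exact H.
  - apply lty_lam. apply (IHlty (Some s0 :: B1) (shift 0 u0) eq_refl).
    exact (lty_weaken nil _ _ _ _ Hu).
  - eapply lty_app; eauto.
  - apply lty_intI; eauto.
  - eapply lty_intE1; eauto.
  - eapply lty_intE2; eauto.
  - apply lty_top; auto.
  - eapply lty_le; eauto.
Qed.

Lemma lty_narrow B1 B2 s s' M (T : tyS) :
  lty Sy (B1 ++ Some s :: B2) M T -> tle Sy s' s -> lty Sy (B1 ++ Some s' :: B2) M T.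
Proof.
  remember (B1 ++ Some s :: B2) as B eqn:HB. intros H Hle. revert B1 HB.
  induction H; intros B1 HB; subst B.
  - destruct (Nat.eq_dec x (length B1)) as [->|Hx].
    + unfold decl in H. rewrite nth_error_mid in H. injection H as <-.
      eapply lty_le; [apply lty_ax, nth_error_mid|exact Hle].
    + apply lty_ax. unfold decl in *.
      rewrite (nth_error_app_cons_neq B1 B2 _ (Some s)) by auto. exact H.
  - apply lty_lam. exact (IHlty (Some s0 :: B1) eq_refl).
  - eapply lty_app; eauto.
  - apply lty_intI; eauto.
  - eapply lty_intE1; eauto.
  - eapply lty_intE2; eauto.
  - apply lty_top; auto.
  - eapply lty_le; eauto.
Qed.

Lemma lty_lam_congr M M' :
  (forall B (T : tyS), lty Sy B M T -> lty Sy B M' T) ->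
  forall B T, lty Sy B (Lam M) T -> lty Sy B (Lam M') T.
Proof.
  intros HM B T H. remember (Lam M) as X eqn:HX. revert HX.
  induction H; intro HX; try discriminate.
  - injection HX as ->. apply lty_lam; auto.
  - apply lty_intI; auto.
  - eapply lty_intE1; eauto.
  - eapply lty_intE2; eauto.
  - apply lty_top; auto.
  - eapply lty_le; eauto.
Qed.

Lemma lty_app_congr M M' N N' :
  (forall B (T : tyS), lty Sy B M T -> lty Sy B M' T) ->
  (forall B (T : tyS), lty Sy B N T -> lty Sy B N' T) ->
  forall B T, lty Sy B (App M N) T -> lty Sy B (App M' N') T.
Proof.
  intros HM HN B T H. remember (App M N) as X eqn:HX. revert HX.
  induction H; intro HX; try discriminate.
  - injection HX as -> ->. eapply lty_app; eauto.
  - apply lty_intI; auto.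
  - eapply lty_intE1; eauto.
  - eapply lty_intE2; eauto.
  - apply lty_top; auto.
  - eapply lty_le; eauto.
Qed.

Lemma sound_of_transfer (R : term -> term -> Prop) :
  (forall M N, R M N -> forall B (T : tyS), lty Sy B N T -> lty Sy B M T) -> sound Sy R.
Proof.
  intros HR B d s H. induction H; simpl.
  - apply lty_top; auto.
  - apply lty_ax; auto.
  - apply lty_lam; auto.
  - eapply lty_app; eauto.
  - apply lty_intI; eauto.
  - eapply lty_intE1; eauto.
  - eapply lty_intE2; eauto.
  - eapply lty_le; eauto.
Qed.

End Typing.

(* Names the constant u_M of the (top) rule; the annotation is arbitrary. *)
Fixpoint embed {A} (a : A) (M : term) : dterm A :=
  match M with
  | Var x => DVar x
  | Lam M => DLam (TAtom a) (embed a M)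
  | App M N => DApp (embed a M) (embed a N)
  end.

Lemma essence_embed {A} (a : A) M : essence (embed a M) = M.
Proof. induction M; simpl; congruence. Qed.

Lemma complete_of_refl Sy (R : term -> term -> Prop) : (forall M, R M M) -> complete Sy R.
Proof.
  intros HR B M s H. induction H.
  - exists (DVar x); split; [reflexivity|apply dty_ax; auto].
  - destruct IHlty as [d [-> Hd]]. exists (DLam s d); split; [reflexivity|apply dty_lam; auto].
  - destruct IHlty1 as [d1 [-> H1]], IHlty2 as [d2 [-> H2]].
    exists (DApp d1 d2); split; [reflexivity|eapply dty_app; eauto].
  - destruct IHlty1 as [d1 [-> H1]], IHlty2 as [d2 [E2 H2]].
    exists (DPair d1 d2); split; [reflexivity|]. apply dty_intI; auto. rewrite <- E2. apply HR.
  - destruct IHlty as [d [-> Hd]]. exists (DPr1 d); split; [reflexivity|eapply dty_intE1; eauto].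
  - destruct IHlty as [d [-> Hd]]. exists (DPr2 d); split; [reflexivity|eapply dty_intE2; eauto].
  - exists (DU (embed w M)); split; [symmetry; apply essence_embed|apply dty_top; auto].
  - destruct IHlty as [d [-> Hd]]. exists (DCoe d t); split; [reflexivity|eapply dty_le; eauto].
Qed.

Section WithOmega.
Variables (Sy : system) (w : atoms Sy).
Hypothesis Hw : omega Sy = Some w.
Notation tyS := (ty (atoms Sy)).

Fixpoint big_int (l : list tyS) : tyS :=
  match l with [] => TAtom w | x :: l => TInt x (big_int l) end.

Lemma big_int_app_l l1 l2 : tle Sy (big_int (l1 ++ l2)) (big_int l1).
Proof.
  induction l1; simpl.
  - apply tle_omega_top; auto.
  - apply tle_glb; [apply tle_incl1|eapply tle_trans; [apply tle_incl2|apply IHl1]].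
Qed.

Lemma big_int_app_r l1 l2 : tle Sy (big_int (l1 ++ l2)) (big_int l2).
Proof.
  induction l1; simpl; [apply tle_refl|eapply tle_trans; [apply tle_incl2|apply IHl1]].
Qed.

(* [covered s u] is the usual characterisation of [s <= u] for [u] not an
   intersection: an atom is omega or a leaf of [s]; an arrow [sg -> tu] is
   dominated by finitely many arrow leaves [sg_i -> tu_i] of [s] with
   [sg <= sg_i] and [/\ tu_i <= tu]. *)
Definition covered (s u : tyS) : Prop :=
  match u with
  | TAtom a => a = w \/ In (TAtom a) (leaves s)
  | TArr sg tu => exists L : list (tyS * tyS),
      (forall p, In p L -> In (TArr (fst p) (snd p)) (leaves s) /\ tle Sy sg (fst p)) /\
      tle Sy (big_int (map snd L)) tu
  | TInt _ _ => True
  end.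

Lemma covered_leaf s u : In u (leaves s) -> covered s u.
Proof.
  destruct u; simpl; intros H; auto.
  exists [(u1, u2)]; split.
  - intros p [<-|[]]; simpl; split; auto; apply tle_refl.
  - apply tle_incl1.
Qed.

Lemma covered_trans s t u :
  (forall v, In v (leaves t) -> covered s v) -> covered t u -> covered s u.
Proof.
  intros Hst Htu. destruct u as [a|sg tu|]; simpl in *; auto.
  - destruct Htu as [->|Hin]; [left; auto|exact (Hst _ Hin)].
  - destruct Htu as [L [HL Hle]].
    enough (exists L', (forall q, In q L' ->
               In (TArr (fst q) (snd q)) (leaves s) /\ tle Sy sg (fst q)) /\
             tle Sy (big_int (map snd L')) (big_int (map snd L)))
      as [L' [H1 H2]] by (exists L'; split; eauto using tle_trans).
    clear Hle. induction L as [|p L IH].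
    + exists []; split; [intros q []|apply tle_refl].
    + destruct (HL p (or_introl eq_refl)) as [Hin Hsp].
      destruct (Hst _ Hin) as [Lp [HLp Hlep]].
      destruct IH as [L' [HL' HleL']]; [intros; apply HL; right; auto|].
      exists (Lp ++ L'); split.
      * intros q Hq. apply in_app_or in Hq as [Hq|Hq]; auto.
        destruct (HLp q Hq); split; eauto using tle_trans.
      * rewrite map_app. simpl. apply tle_glb.
        -- eapply tle_trans; [apply big_int_app_l|exact Hlep].
        -- eapply tle_trans; [apply big_int_app_r|exact HleL'].
Qed.

Lemma tle_covered s t : tle Sy s t -> forall u, In u (leaves t) -> covered s u.
Proof.
  induction 1; intros u Hu; simpl in Hu.
  - apply covered_leaf; auto.
  - apply covered_leaf; simpl; apply in_or_app; auto.
  - apply covered_leaf; simpl; apply in_or_app; auto.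
  - apply in_app_or in Hu as [Hu|Hu]; auto.
  - eapply covered_trans; eauto.
  - destruct Hu as [<-|[]]. left. congruence.
  - destruct Hu as [<-|[]]. exists []; split; [intros p []|apply tle_omega_top; auto].
  - destruct Hu as [<-|[]]. exists [(s, t); (s, r)]; split.
    + intros p [<-|[<-|[]]]; simpl; auto using tle_refl.
    + apply tle_glb; [apply tle_incl1|eapply tle_trans; [apply tle_incl2|apply tle_incl1]].
  - destruct Hu as [<-|[]]. exists [(s1, t1)]; split.
    + intros p [<-|[]]; simpl; auto.
    + eapply tle_trans; [apply tle_incl1|auto].
Qed.

Lemma lty_lam_inv B M t : lty Sy B (Lam M) t -> forall u, In u (leaves t) ->
  u = TAtom w \/ exists r tau, u = TArr r tau /\ lty Sy (Some r :: B) M tau.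
Proof.
  remember (Lam M) as X eqn:HX. intros H. revert HX.
  induction H; intros HX u Hu; try discriminate.
  - injection HX as ->. destruct Hu as [<-|[]]. right; eauto.
  - simpl in Hu; apply in_app_or in Hu as [Hu|Hu]; auto.
  - apply IHlty; simpl; auto using in_or_app.
  - apply IHlty; simpl; auto using in_or_app.
  - destruct Hu as [<-|[]]. left. congruence.
  - pose proof (tle_covered _ _ H0 u Hu) as Hcov. destruct u as [a|u1 u2|p q].
    + destruct Hcov as [->|Hin]; [left; auto|].
      destruct (IHlty HX _ Hin) as [?|[r [tau [E _]]]]; [left; auto|discriminate].
    + right. exists u1, u2; split; auto. destruct Hcov as [L [HL Hle]].
      eapply lty_le; [|exact Hle]. clear Hle. induction L as [|p L IHL]; simpl.
      * apply lty_top; auto.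
      * destruct (HL p (or_introl eq_refl)) as [Hin Hs].
        apply lty_intI; [|apply IHL; intros; apply HL; right; auto].
        destruct (IHlty HX _ Hin) as [E|[r [tau [E Hty]]]]; [discriminate|].
        injection E as E1 E2. rewrite <- E1, <- E2 in Hty.
        exact (lty_narrow Sy nil B _ _ _ _ Hty Hs).
    + exfalso. exact (leaves_not_int _ _ p q Hu eq_refl).
Qed.

Lemma lty_common_type B N (P : tyS -> tyS -> Prop) :
  (forall s s' u, tle Sy s' s -> P s u -> P s' u) ->
  forall l, (forall u, In u l -> exists s, P s u /\ lty Sy B N s) ->
  exists s, lty Sy B N s /\ forall u, In u l -> P s u.
Proof.
  intros Hanti l; induction l as [|a l IH]; intros H.
  - exists (TAtom w); split; [apply lty_top; auto|intros u []].
  - destruct (H a (or_introl eq_refl)) as [s1 [P1 N1]].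
    destruct IH as [s2 [N2 P2]]; [intros; apply H; right; auto|].
    exists (TInt s1 s2); split; [apply lty_intI; auto|].
    intros u [<-|Hu]; [eapply Hanti; [apply tle_incl1|auto]|eapply Hanti; [apply tle_incl2|auto]].
Qed.

Lemma lty_lam_omega_only B M t a :
  lty Sy B (Lam M) t -> In (TAtom a) (leaves t) -> a = w.
Proof.
  intros H Hin. destruct (lty_lam_inv B M t H _ Hin) as [E|[r [tau [E _]]]];
    [injection E; auto|discriminate].
Qed.

(* Generation for applications depends on the arrow rules of the theory. *)
Definition app_inversion : Prop :=
  forall B P N t, lty Sy B (App P N) t -> forall u, In u (leaves t) ->
  u = TAtom w \/ exists r tau, lty Sy B P (TArr r tau) /\ lty Sy B N r /\ tle Sy tau u.

Hypothesis HA : app_inversion.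

Lemma lty_beta_redex B M N t : lty Sy B (App (Lam M) N) t -> lty Sy B (subst 0 N M) t.
Proof.
  intros H. apply lty_of_leaves. intros u Hu.
  destruct (HA _ _ _ _ H u Hu) as [->|[r [tau [H1 [H2 H3]]]]]; [apply lty_top; auto|].
  destruct (lty_lam_inv _ _ _ H1 _ (or_introl eq_refl)) as [E|[r' [tau' [E Hty]]]];
    [discriminate|].
  injection E as <- <-.
  eapply lty_le; [exact (lty_subst Sy nil B r N M tau Hty H2)|exact H3].
Qed.

(* The argument is typed by the intersection of the types of its occurrences,
   or by omega when it has none. *)
Lemma lty_subst_inv M B1 B2 N T :
  lty Sy (B1 ++ B2) (subst (length B1) (lift (length B1) N) M) T ->
  exists s, lty Sy (B1 ++ Some s :: B2) M T /\ lty Sy B2 N s.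
Proof.
  revert B1 T; induction M as [n|M IH|M1 IH1 M2 IH2]; intros B1 T H; simpl in H.
  - revert H. destruct (Nat.compare_spec n (length B1)) as [->|Hc|Hc]; intro H.
    + exists T; split; [apply lty_ax, nth_error_mid|eapply lty_unlift; eauto].
    + exists (TAtom w); split; [|apply lty_top; auto].
      pose proof (lty_weaken Sy B1 B2 (Some (TAtom w)) _ _ H) as H'. simpl in H'.
      revert H'. destruct (Nat.ltb_spec n (length B1)); [auto|lia].
    + exists (TAtom w); split; [|apply lty_top; auto].
      pose proof (lty_weaken Sy B1 B2 (Some (TAtom w)) _ _ H) as H'. simpl in H'.
      revert H'. destruct (Nat.ltb_spec (pred n) (length B1)); [lia|].
      replace (S (pred n)) with n by lia. auto.
  - destruct (lty_common_type B2 N (fun s u => lty Sy (B1 ++ Some s :: B2) (Lam M) u))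
      with (l := leaves T) as [s [HN Hs]].
    + intros s s' u Hle Hs. eapply lty_narrow; eauto.
    + intros u Hu. destruct (lty_lam_inv _ _ _ H _ Hu) as [->|[r [tau [-> Hty]]]].
      * exists (TAtom w); split; apply lty_top; auto.
      * destruct (IH (Some r :: B1) tau Hty) as [s [Hs HN]].
        exists s; split; auto. apply lty_lam, Hs.
    + exists s; split; auto. apply lty_of_leaves; auto.
  - destruct (lty_common_type B2 N (fun s u => lty Sy (B1 ++ Some s :: B2) (App M1 M2) u))
      with (l := leaves T) as [s [HN Hs]].
    + intros s s' u Hle Hs. eapply lty_narrow; eauto.
    + intros u Hu. destruct (HA _ _ _ _ H u Hu) as [->|[r [tau [H1 [H2 H3]]]]].
      * exists (TAtom w); split; apply lty_top; auto.
      * destruct (IH1 B1 _ H1) as [s1 [Hs1 HN1]], (IH2 B1 _ H2) as [s2 [Hs2 HN2]].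
        exists (TInt s1 s2); split; [|apply lty_intI; auto].
        eapply lty_le; [|exact H3]. eapply lty_app.
        -- eapply lty_narrow; [exact Hs1|apply tle_incl1].
        -- eapply lty_narrow; [exact Hs2|apply tle_incl2].
    + exists s; split; auto. apply lty_of_leaves; auto.
Qed.

Lemma lty_beta_expand B M N t : lty Sy B (subst 0 N M) t -> lty Sy B (App (Lam M) N) t.
Proof.
  intros H. destruct (lty_subst_inv M nil B N t H) as [s [H1 H2]].
  eapply lty_app; [apply lty_lam, H1|exact H2].
Qed.

Lemma lty_beta_iff M N : beta M N -> forall B T, lty Sy B M T <-> lty Sy B N T.
Proof.
  induction 1; intros B T; split; intro H';
    solve [ apply lty_beta_redex; auto | apply lty_beta_expand; auto
          | eapply lty_lam_congr; [|exact H']; intros; apply IHbeta; auto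
          | eapply lty_app_congr; [| |exact H']; intros; auto; apply IHbeta; auto ].
Qed.

Lemma lty_eq_beta_iff M N : eq_beta M N -> forall B T, lty Sy B M T <-> lty Sy B N T.
Proof.
  induction 1; intros B T.
  - apply lty_beta_iff; auto.
  - tauto.
  - rewrite IHclos_refl_sym_trans; tauto.
  - rewrite IHclos_refl_sym_trans1; auto.
Qed.

Lemma sound_eq_beta : sound Sy eq_beta.
Proof. apply sound_of_transfer. intros M N E B T. apply lty_eq_beta_iff; auto. Qed.

End WithOmega.

Lemma tle_CDS_leaves s t : tle CDS s t ->
  forall u, In u (leaves t) -> u = TAtom None \/ In u (leaves s).
Proof.
  induction 1; intros u Hu; simpl in *; try discriminate.
  - auto.
  - right; apply in_or_app; auto.
  - right; apply in_or_app; auto.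
  - apply in_app_or in Hu as [Hu|Hu]; auto.
  - destruct (IHtle2 u Hu); auto.
  - destruct Hu as [<-|[]]; left; congruence.
Qed.

Lemma app_inversion_CDS : app_inversion CDS None.
Proof.
  intros B P N t H. remember (App P N) as X eqn:HX. revert HX.
  induction H; intros HX u Hu; try discriminate.
  - injection HX as -> ->. right. exists s, t. auto using tle_leaf.
  - simpl in Hu; apply in_app_or in Hu as [Hu|Hu]; auto.
  - apply IHlty; simpl; auto using in_or_app.
  - apply IHlty; simpl; auto using in_or_app.
  - destruct Hu as [<-|[]]. injection H as <-. auto.
  - destruct (tle_CDS_leaves _ _ H0 u Hu) as [->|Hin]; auto.
Qed.

Lemma lty_BCD_app_inv B P N t : lty BCD B (App P N) t ->
  exists r, lty BCD B P (TArr r t) /\ lty BCD B N r.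
Proof.
  remember (App P N) as X eqn:HX. intros H. revert HX.
  induction H; intros HX; try discriminate.
  - injection HX as -> ->. eauto.
  - destruct (IHlty1 HX) as [r1 [A1 C1]], (IHlty2 HX) as [r2 [A2 C2]].
    exists (TInt r1 r2); split; [|apply lty_intI; auto].
    eapply lty_le; [apply lty_intI; [exact A1|exact A2]|].
    eapply tle_trans; [|apply tle_arr_int; reflexivity].
    apply tle_glb.
    + eapply tle_trans; [apply tle_incl1|apply tle_arr; auto using tle_incl1, tle_refl].
    + eapply tle_trans; [apply tle_incl2|apply tle_arr; auto using tle_incl2, tle_refl].
  - destruct (IHlty HX) as [r [A1 C1]]. exists r; split; auto.
    eapply lty_le; [exact A1|apply tle_arr; auto using tle_refl, tle_incl1].
  - destruct (IHlty HX) as [r [A1 C1]]. exists r; split; auto.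
    eapply lty_le; [exact A1|apply tle_arr; auto using tle_refl, tle_incl2].
  - exists (TAtom w); split; [|apply lty_top; auto].
    eapply lty_le; [apply lty_top, H|apply tle_omega_arr; auto].
  - destruct (IHlty HX) as [r [A1 C1]]. exists r; split; auto.
    eapply lty_le; [exact A1|apply tle_arr; auto using tle_refl].
Qed.

Lemma app_inversion_BCD : app_inversion BCD None.
Proof.
  intros B P N t H u Hu. destruct (lty_BCD_app_inv _ _ _ _ H) as [r [H1 H2]].
  right; exists r, t; auto using tle_leaf.
Qed.

Section WithoutOmega.
Variable Sy : system.
Hypothesis H0 : omega Sy = None.
Notation tyS := (ty (atoms Sy)).

Lemma lty_var_inv B x t : lty Sy B (Var x) t -> exists s, decl Sy B x s /\ tle Sy s t.
Proof.
  remember (Var x) as X eqn:HX. intros H. revert HX.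
  induction H; intros HX; try discriminate.
  - injection HX as ->. exists s; split; auto using tle_refl.
  - destruct (IHlty1 HX) as [s1 [D1 L1]], (IHlty2 HX) as [s2 [D2 L2]].
    unfold decl in *. rewrite D1 in D2. injection D2 as ->.
    exists s2; split; auto using tle_glb.
  - destruct (IHlty HX) as [s1 [D1 L1]]. eauto using tle_trans, tle_incl1.
  - destruct (IHlty HX) as [s1 [D1 L1]]. eauto using tle_trans, tle_incl2.
  - congruence.
  - destruct (IHlty HX) as [s1 [D1 L1]]. eauto using tle_trans.
Qed.

Lemma lty_app_arrow B P N t : lty Sy B (App P N) t ->
  exists r tau, lty Sy B P (TArr r tau) /\ lty Sy B N r.
Proof.
  remember (App P N) as X eqn:HX. intros H. revert HX.
  induction H; intros HX; try discriminate; eauto.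
  - injection HX as -> ->. eauto.
  - congruence.
Qed.

Lemma tle_atom_leaves a (s t : tyS) : tle Sy s t ->
  (forall u, In u (leaves s) -> u = TAtom a) -> forall u, In u (leaves t) -> u = TAtom a.
Proof.
  induction 1; intros Hs u Hu; simpl in *; try congruence.
  - auto.
  - apply Hs, in_or_app; auto.
  - apply Hs, in_or_app; auto.
  - apply in_app_or in Hu as [Hu|Hu]; auto.
  - eauto.
  - discriminate (Hs _ (or_introl eq_refl)).
  - discriminate (Hs _ (or_introl eq_refl)).
Qed.

Lemma not_tle_atom_arr a (r tau : tyS) : ~ tle Sy (TAtom a) (TArr r tau).
Proof.
  intros H. assert (E : TArr r tau = TAtom a)
    by (apply (tle_atom_leaves a _ _ H); simpl; intuition congruence).
  discriminate.
Qed.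

Definition arrows_reject (b t : tyS) : Prop :=
  forall r tau, In (TArr r tau) (leaves t) -> ~ tle Sy b r.

Lemma tle_arrows_reject b s t : tle Sy s t -> arrows_reject b s -> arrows_reject b t.
Proof.
  unfold arrows_reject. induction 1; intros Hs r0 tau0 Hu; simpl in *; try congruence.
  - eauto.
  - apply (Hs r0 tau0), in_or_app; auto.
  - apply (Hs r0 tau0), in_or_app; auto.
  - apply in_app_or in Hu as [Hu|Hu]; eauto.
  - eauto.
  - destruct Hu as [E|[]]. injection E as <- <-. eapply Hs; left; reflexivity.
  - destruct Hu as [E|[]]. injection E as <- <-. intro Hb.
    apply (Hs s1 t1 (or_introl eq_refl)). eauto using tle_trans.
Qed.

(* lam x. (lam y. x) (x x): it beta-reduces to lam x. x, yet x x forces x to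
   have an arrow type, which an atom never has without omega. *)
Local Notation discard_self_app := (Lam (App (Lam (Var 1)) (App (Var 0) (Var 0)))).

Lemma lty_discard_self_app_reject a B t :
  lty Sy B discard_self_app t -> arrows_reject (TAtom a) t.
Proof.
  remember discard_self_app as X eqn:HX. intros H. revert HX.
  induction H; intros HX; try discriminate.
  - injection HX as ->. intros r tau [E|[]] Hb. injection E as <- <-.
    destruct (lty_app_arrow _ _ _ _ H) as [r1 [t1 [_ HA]]].
    destruct (lty_app_arrow _ _ _ _ HA) as [r2 [t2 [HV _]]].
    destruct (lty_var_inv _ _ _ HV) as [s0 [D L]].
    unfold decl in D; simpl in D; injection D as <-.
    exact (not_tle_atom_arr a r2 t2 (tle_trans _ _ _ _ Hb L)).
  - intros r tau Hu. simpl in Hu. apply in_app_or in Hu as [Hu|Hu];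
      [apply (IHlty1 HX r tau Hu)|apply (IHlty2 HX r tau Hu)].
  - intros r tau Hu. apply (IHlty HX r tau). simpl. apply in_or_app; auto.
  - intros r tau Hu. apply (IHlty HX r tau). simpl. apply in_or_app; auto.
  - congruence.
  - eapply tle_arrows_reject; eauto.
Qed.

Lemma not_sound_of_no_omega (a : atoms Sy) (R : term -> term -> Prop) :
  R discard_self_app (Lam (Var 0)) -> ~ sound Sy R.
Proof.
  intros HR Hs.
  set (aa := TArr (TAtom a) (TAtom a)).
  assert (Hd : dty Sy R nil
    (DPair (DLam (TInt aa (TAtom a))
              (DApp (DLam (TAtom a) (DVar 1)) (DApp (DPr1 (DVar 0)) (DPr2 (DVar 0)))))
           (DLam (TAtom a) (DVar 0)))
    (TInt (TArr (TInt aa (TAtom a)) (TInt aa (TAtom a))) aa)).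
  { apply dty_intI; [|apply dty_lam, dty_ax; reflexivity|exact HR].
    apply dty_lam. eapply dty_app.
    - apply dty_lam, dty_ax. reflexivity.
    - eapply dty_app; [eapply dty_intE1|eapply dty_intE2]; apply dty_ax; reflexivity. }
  apply Hs, lty_intE2 in Hd.
  exact (lty_discard_self_app_reject a _ _ Hd (TAtom a) (TAtom a) (or_introl eq_refl)
           (tle_refl _ _)).
Qed.

End WithoutOmega.

Lemma eq_beta_discard_self_app :
  eq_beta (Lam (App (Lam (Var 1)) (App (Var 0) (Var 0)))) (Lam (Var 0)).
Proof. apply rst_step, beta_lam. exact (beta_red (Var 1) (App (Var 0) (Var 0))). Qed.

Lemma eq_betaeta_discard_self_app :
  eq_betaeta (Lam (App (Lam (Var 1)) (App (Var 0) (Var 0)))) (Lam (Var 0)).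
Proof. apply rst_step, be_lam. exact (be_beta (Var 1) (App (Var 0) (Var 0))). Qed.

Lemma not_sound_BCD_betaeta : ~ sound BCD eq_betaeta.
Proof.
  intros Hs.
  assert (Hd : dty BCD eq_betaeta [Some (TAtom (Some 0))]
     (DPair (DLam (TAtom None) (DU (DApp (DVar 1) (DVar 0)))) (DVar 0))
     (TInt (TArr (TAtom None) (TAtom None)) (TAtom (Some 0)))).
  { apply dty_intI.
    - apply dty_lam, dty_top. reflexivity.
    - apply dty_ax. reflexivity.
    - apply rst_step. exact (be_eta (Var 0)). }
  apply Hs, lty_intE2 in Hd.
  discriminate (lty_lam_omega_only BCD None eq_refl _ _ _ _ Hd (or_introl eq_refl)).
Qed.

Theorem mainTheorem14 :
  (* (a) soundness *)
  (sound CD eq_syn /\ sound CDV eq_syn /\ sound CDS eq_syn /\ sound BCD eq_syn /\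
   sound CDS eq_beta /\ sound BCD eq_beta) /\
  (~ sound CD eq_beta /\ ~ sound CDV eq_beta /\
   ~ sound CDV eq_betaeta /\ ~ sound BCD eq_betaeta) /\
  (* (b) completeness *)
  (complete CD eq_syn /\ complete CDS eq_syn /\ complete CDV eq_syn /\ complete BCD eq_syn /\
   complete CD eq_beta /\ complete CDS eq_beta /\ complete CDV eq_beta /\ complete BCD eq_beta /\
   complete CDV eq_betaeta /\ complete BCD eq_betaeta) /\
  (* consequence: isomorphism exactly for the six sound systems *)
  (isomorphic CD eq_syn /\ isomorphic CDV eq_syn /\ isomorphic CDS eq_syn /\
   isomorphic BCD eq_syn /\ isomorphic CDS eq_beta /\ isomorphic BCD eq_beta) /\
  (~ isomorphic CD eq_beta /\ ~ isomorphic CDV eq_beta /\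
   ~ isomorphic CDV eq_betaeta /\ ~ isomorphic BCD eq_betaeta).
Proof.
  assert (Ssyn : forall Sy, sound Sy eq_syn)
    by (intros; apply sound_of_transfer; intros M N E; unfold eq_syn in E; subst; auto).
  pose proof (sound_eq_beta CDS None eq_refl app_inversion_CDS) as SCDS.
  pose proof (sound_eq_beta BCD None eq_refl app_inversion_BCD) as SBCD.
  pose proof (not_sound_of_no_omega CD eq_refl 0 _ eq_beta_discard_self_app) as N1.
  pose proof (not_sound_of_no_omega CDV eq_refl 0 _ eq_beta_discard_self_app) as N2.
  pose proof (not_sound_of_no_omega CDV eq_refl 0 _ eq_betaeta_discard_self_app) as N3.
  pose proof not_sound_BCD_betaeta as N4.
  assert (Csyn : forall Sy, complete Sy eq_syn) by (intros; apply complete_of_refl; reflexivity).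
  assert (Cb : forall Sy, complete Sy eq_beta) by (intros; apply complete_of_refl, rst_refl).
  assert (Cbe : forall Sy, complete Sy eq_betaeta) by (intros; apply complete_of_refl, rst_refl).
  unfold isomorphic. repeat split; auto; intros [H _]; auto.
Qed.
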